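(* There exists a constant $k_1$ such that for every integer $m\ge1$ there exists an acyclic directed multigraph $D'_m$ with exactly $m$ arcs such that $\mathrm{mac}(D'_m)\le\frac m4+k_1m^{3/4}$.
   Context: A directed multigraph may have parallel arcs (but no loops); it is acyclic if it contains no directed cycle. For a directed multigraph, $\mathrm{mac}(D)$ is the maximum, over all partitions $(X,Y)$ of the vertex set, of the number of arcs (counted with multiplicity) going from $X$ to $Y$. *)

From mathcomp Require Import all_boot.
Set Implicit Arguments. Unset Strict Implicit. Unset Printing Implicit Defensive.

(* A directed multigraph on vertex set 'I_n : w i j = number of parallel arcs i -> j. *)
Definition multidigraph (n : nat) := 'I_n -> 'I_n -> nat.

Definition loopless n (w : multidigraph n) : Prop := forall i, w i i = 0.

Definition arc_rel n (w : multidigraph n) : rel 'I_n := fun i j => 0 < w i j.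

Definition acyclic n (w : multidigraph n) : Prop :=
  forall (x : 'I_n) (p : seq 'I_n),
    path (arc_rel w) x p -> p != [::] -> last x p != x.

Definition num_arcs n (w : multidigraph n) : nat := \sum_(i : 'I_n) \sum_(j : 'I_n) w i j.

Definition cut_arcs n (w : multidigraph n) (X : {set 'I_n}) : nat :=
  \sum_(i in X) \sum_(j in ~: X) w i j.

Definition mac n (w : multidigraph n) : nat := \max_(X : {set 'I_n}) cut_arcs w X.

From mathcomp Require Import all_boot zify.
From Stdlib Require Import Reals Lra.
(* Reals rebinds [^] on nat to [Nat.pow]; restore ssrnat's [expn] notation. *)
Import ssrnat.
Set Implicit Arguments. Unset Strict Implicit. Unset Printing Implicit Defensive.

(* The construction is the "band graph" of width K on the vertices 0..n-1:
   for i < j there are (i + K - j)_+ parallel arcs i -> j.  This is exactly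
   the superposition, over all windows {s-K+1, ..., s} of K consecutive
   vertices, of the transitive tournaments on the windows.  For a partition
   (X, Y), the number D of arcs joining X and Y in either direction is at
   most half of all arcs, up to an error nK/4, because a window with a
   vertices in X and b in Y contributes ab <= (a+b)^2/4 such pairs.  The
   forward cut X -> Y is (D + out(X) - in(X)) / 2, and out(X) - in(X) is at
   most K * K(K-1)/2.  Adding r < K(K-1)/2 parallel arcs 0 -> 1 makes the
   number of arcs exactly m; with k^4 <= m < (k+1)^4, K = k+1 and n maximal
   with at most m band arcs, every error term is O(k^3) = O(m^(3/4)). *)

Section MultigraphFacts.
Variable n : nat.
Implicit Types (w : multidigraph n) (X : {set 'I_n}).

Definition graph_sum w1 w2 : multidigraph n := fun i j => w1 i j + w2 i j.

Lemma num_arcs_sum w1 w2 :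
  num_arcs (graph_sum w1 w2) = num_arcs w1 + num_arcs w2.
Proof.
by rewrite /num_arcs -big_split; apply: eq_bigr => i _; rewrite -big_split.
Qed.

Lemma cut_arcs_sum w1 w2 X :
  cut_arcs (graph_sum w1 w2) X = cut_arcs w1 X + cut_arcs w2 X.
Proof.
by rewrite /cut_arcs -big_split; apply: eq_bigr => i _; rewrite -big_split.
Qed.

Lemma cut_arcs_indicator w X :
  cut_arcs w X = \sum_i \sum_j w i j * ((i \in X) && (j \notin X)).
Proof.
rewrite /cut_arcs big_mkcond; apply: eq_bigr => i _.
case: (i \in X) => /=; last by rewrite big1 // => j _; rewrite muln0.
rewrite big_mkcond; apply: eq_bigr => j _.
by rewrite in_setC; case: (j \in X); rewrite ?muln1 ?muln0.
Qed.

Lemma mac_le w c d : 0 < c -> (forall X, c * cut_arcs w X <= d) -> c * mac w <= d.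
Proof.
move=> c_gt0 cutX; rewrite mulnC -leq_divRL //.
by apply/bigmax_leqP => X _; rewrite leq_divRL // mulnC.
Qed.

Lemma cut_arcs_le_num_arcs w X : cut_arcs w X <= num_arcs w.
Proof.
rewrite cut_arcs_indicator; apply: leq_sum => i _; apply: leq_sum => j _.
by rewrite -[leqRHS]muln1 leq_mul2l leq_b1 orbT.
Qed.

Definition forward w := forall i j, 0 < w i j -> i < j.

Lemma forward_loopless w : forward w -> loopless w.
Proof. by move=> fw i; apply/eqP; rewrite -leqn0 leqNgt; apply/negP => /fw; rewrite ltnn. Qed.

Lemma forward_path_last w x p :
  forward w -> path (arc_rel w) x p -> p != [::] -> x < last x p.
Proof.
move=> fw; elim: p x => [|y p IH] x //= /andP [/fw lt_xy py] _.
case: p IH py => [|z p] IH py //=.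
exact: ltn_trans lt_xy (IH y py isT).
Qed.

Lemma forward_acyclic w : forward w -> acyclic w.
Proof.
move=> fw x p px p_ne0.
by rewrite neq_ltn (forward_path_last fw px p_ne0) orbT.
Qed.
End MultigraphFacts.

Lemma sum_ord_indicator n c f : \sum_(j < n) (nat_of_ord j == c) * f = (c < n) * f.
Proof.
elim: n => [|n IH]; first by rewrite big_ord0.
rewrite big_ord_recr /= IH ltnS [c <= n]leq_eqVlt eq_sym.
by case: eqP => [->|_]; rewrite ?ltnn /= ?mul0n ?addn0 ?add0n ?mul1n.
Qed.

Definition parallel_arcs n r : multidigraph n :=
  fun i j => ((nat_of_ord i == 0) && (nat_of_ord j == 1)) * r.
Arguments parallel_arcs : clear implicits.

Lemma parallel_arcs_forward n r : forward (parallel_arcs n r).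
Proof.
move=> i j; rewrite /parallel_arcs.
by case: eqP => [->|] //; case: eqP => [->|].
Qed.

Lemma num_arcs_parallel n r : 1 < n -> num_arcs (parallel_arcs n r) = r.
Proof.
move=> n_gt1; rewrite /num_arcs /parallel_arcs.
rewrite (eq_bigr (fun i : 'I_n => (nat_of_ord i == 0) * ((1 < n) * r))).
  by rewrite sum_ord_indicator n_gt1 (ltn_trans _ n_gt1) // !mul1n.
move=> i _; rewrite -sum_ord_indicator big_distrr /=.
by apply: eq_bigr => j _; case: (_ == 0); case: (_ == 1); rewrite ?mul0n ?mul1n.
Qed.

Definition band (K i j : nat) : nat := if i < j then i + K - j else 0.

Definition band_graph K n : multidigraph n := fun i j => band K i j.
Arguments band_graph : clear implicits.

Lemma band_graph_forward K n : forward (band_graph K n).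
Proof. by move=> i j; rewrite /band_graph /band; case: (ltnP i j). Qed.

(* band_deg K N = (K-1) + (K-2) + ... + (K-N), with terms truncated at 0;
   it is the in-degree of vertex N and the out-degree of vertex n-1-N. *)
Definition band_deg (K N : nat) : nat := \sum_(t < N) (K - 1 - t).

Definition band_max (K : nat) : nat := band_deg K K.

Lemma band_degS K N : band_deg K N.+1 = band_deg K N + (K - 1 - N).
Proof. by rewrite /band_deg big_ord_recr. Qed.

Lemma band_deg_mono K N M : N <= M -> band_deg K N <= band_deg K M.
Proof.
elim: M => [|M IH]; first by rewrite leqn0 => /eqP ->.
rewrite leq_eqVlt => /orP [/eqP -> //|/IH le_NM].
by rewrite band_degS (leq_trans le_NM) ?leq_addr.
Qed.

Lemma band_deg_sat K N : K <= N -> band_deg K N = band_max K.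
Proof.
elim: N => [|N IH]; first by rewrite leqn0 => /eqP ->.
rewrite leq_eqVlt => /orP [/eqP -> //|lt_KN].
rewrite band_degS IH //; lia.
Qed.

Lemma band_deg_le_max K N : band_deg K N <= band_max K.
Proof.
by case: (leqP N K) => [/band_deg_mono //|/ltnW/band_deg_sat ->].
Qed.

Lemma band_max_double K : 2 * band_max K = K * (K - 1).
Proof.
elim: K => [|K IH]; first by rewrite /band_max /band_deg big_ord0.
have -> : band_max K.+1 = K + band_max K.
  rewrite /band_max /band_deg big_ord_recl /=; congr (_ + _); first lia.
  by apply: eq_bigr => t _; rewrite /bump /=; lia.
rewrite mulnDr IH; nia.
Qed.

Lemma band_out_degree K i N : \sum_(j < N) band K i j = band_deg K (N - i.+1).
Proof.
elim: N => [|N IH]; first by rewrite big_ord0 /band_deg sub0n big_ord0.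
rewrite big_ord_recr /= IH /band; case: (ltnP i N) => lt_iN.
  have -> : N.+1 - i.+1 = (N - i.+1).+1 by lia.
  by rewrite band_degS; congr (_ + _); lia.
have -> : N.+1 - i.+1 = N - i.+1 by lia.
by rewrite addn0.
Qed.

Lemma band_in_degree K N i : i <= N -> \sum_(j < N) band K j i = band_deg K i.
Proof.
move=> le_iN; rewrite -(big_mkord xpredT (band K ^~ i)) /=.
rewrite (big_cat_nat (leq0n i) le_iN) /= [X in _ + X]big1_seq ?addn0; last first.
  by move=> j /andP [_]; rewrite mem_index_iota => /andP [le_ij _]; rewrite /band ltnNge le_ij.
rewrite big_rev_mkord subn0 /band_deg; apply: eq_bigr => t _.
have := ltn_ord t; rewrite /band => lt_ti; rewrite ifT; lia.
Qed.

Definition band_arcs (K n : nat) : nat := \sum_(i < n) band_deg K i.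

Lemma num_arcs_band K n : num_arcs (band_graph K n) = band_arcs K n.
Proof.
rewrite /num_arcs exchange_big; apply: eq_bigr => j _.
exact/band_in_degree/ltnW.
Qed.

Lemma band_arcsS K n : band_arcs K n.+1 = band_arcs K n + band_deg K n.
Proof. by rewrite /band_arcs big_ord_recr. Qed.

Lemma band_arcs_two K : band_arcs K 2 = K - 1.
Proof. by rewrite !band_arcsS /band_arcs /band_deg !big_ord0 big_ord1 /= subn0. Qed.

(* Every vertex beyond the first K has in-degree band_max K. *)
Lemma band_arcs_lower K n : (n - K) * band_max K <= band_arcs K n.
Proof.
elim: n => [|n IH]; first by rewrite sub0n.
rewrite band_arcsS; case: (leqP K n) => [le_Kn|lt_nK]; last by have -> : n.+1 - K = 0 by lia.
rewrite band_deg_sat // (_ : n.+1 - K = (n - K).+1); last by lia.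
by rewrite mulSn addnC leq_add.
Qed.

Lemma count_interval a b N : \sum_(s < N) ((a <= s) && (s < b)) = minn b N - a.
Proof.
elim: N => [|N IH]; first by rewrite big_ord0; lia.
by rewrite big_ord_recr /= IH; case: (leqP a N); case: (ltnP N b) => /=; lia.
Qed.

(* Vertex i lies in the window {s-K+1, ..., s}. *)
Definition in_window (K s i : nat) : bool := (i <= s) && (s < i + K).

Lemma in_window_count K n (i : 'I_n) : \sum_(s < n + K) in_window K s i = K.
Proof. by rewrite count_interval; have := ltn_ord i; lia. Qed.

Lemma band_windows K n (i j : 'I_n) :
  band K i j = \sum_(s < n + K) [&& i < j, in_window K s i & in_window K s j].
Proof.
rewrite /band; case: (ltnP i j) => [lt_ij|le_ji]; last by rewrite big1.
have -> : i + K - j = minn (i + K) (n + K) - j by have := ltn_ord i; lia.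
rewrite -count_interval; apply: eq_bigr => s _; congr nat_of_bool.
by rewrite /in_window; apply/idP/idP; lia.
Qed.

Lemma band_window_sum K n (c : 'I_n -> 'I_n -> bool) :
  \sum_(i < n) \sum_(j < n) band K i j * c i j =
  \sum_(s < n + K) \sum_(i < n) \sum_(j < n) [&& i < j, in_window K s i, in_window K s j & c i j].
Proof.
rewrite [RHS]exchange_big; apply: eq_bigr => i _ /=.
rewrite [RHS]exchange_big; apply: eq_bigr => j _ /=.
rewrite band_windows big_distrl; apply: eq_bigr => s _ /=.
by case: (c i j); rewrite ?andbT ?andbF ?muln1 ?muln0.
Qed.

Lemma sum_and_pairs n (u v : 'I_n -> bool) :
  \sum_(i < n) \sum_(j < n) (u i && v j) = (\sum_(i < n) u i) * (\sum_(j < n) v j).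
Proof.
rewrite big_distrl; apply: eq_bigr => i _ /=; rewrite big_distrr.
by apply: eq_bigr => j _; case: (u i); case: (v j).
Qed.

Lemma sum_ordered_pairs n (g : 'I_n -> 'I_n -> bool) : symmetric g ->
  \sum_(i < n) \sum_(j < n) g i j =
  2 * (\sum_(i < n) \sum_(j < n) ((i < j) && g i j)) + \sum_(i < n) g i i.
Proof.
move=> gsym.
have split_ij i j : g i j = ((i < j) && g i j) + ((j < i) && g j i) + ((i == j) && g i j) :> nat.
  rewrite -(gsym j i) -(inj_eq val_inj) /=.
  by case: (ltngtP i j); rewrite ?andbF ?addn0 ?add0n.
rewrite (eq_bigr (fun i : 'I_n => \sum_(j < n) ((i < j) && g i j)
    + \sum_(j < n) ((j < i) && g j i) + \sum_(j < n) ((i == j) && g i j))); last first.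
  by move=> i _; rewrite -!big_split; apply: eq_bigr => j _; exact: split_ij.
rewrite !big_split /=.
rewrite [X in _ + X + _]exchange_big /= addnn -mul2n; congr (_ + _).
apply: eq_bigr => i _; rewrite (bigD1 i) //= eqxx big1 ?addn0 // => j.
by rewrite eq_sym => /negbTE ->.
Qed.

(* In a single window W with a vertices on one side of x and b on the other,
   4ab <= (a+b)^2, i.e. at most half of the pairs (plus |W|/4) cross. *)
Lemma window_crossing n (W x : 'I_n -> bool) :
  4 * (\sum_(i < n) \sum_(j < n) [&& i < j, W i, W j & x i != x j])
  <= 2 * (\sum_(i < n) \sum_(j < n) [&& i < j, W i & W j]) + \sum_(i < n) W i.
Proof.
set a := \sum_(i < n) (W i && x i); set b := \sum_(i < n) (W i && ~~ x i).
have size_W : \sum_(i < n) W i = a + b.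
  by rewrite -big_split; apply: eq_bigr => i _; case: (W i); case: (x i).
have crossing_ordered : \sum_(i < n) \sum_(j < n) [&& W i, W j & x i != x j] = 2 * (a * b).
  rewrite mul2n -addnn {2}mulnC -!sum_and_pairs -big_split; apply: eq_bigr => i _.
  by rewrite -big_split; apply: eq_bigr => j _; case: (W i); case: (W j); case: (x i); case: (x j).
have all_ordered : \sum_(i < n) \sum_(j < n) (W i && W j) = (a + b) * (a + b).
  by rewrite -size_W -sum_and_pairs.
have crossing : 2 * (a * b) =
    2 * (\sum_(i < n) \sum_(j < n) [&& i < j, W i, W j & x i != x j]).
  rewrite -crossing_ordered
    (@sum_ordered_pairs _ (fun i j => [&& W i, W j & x i != x j])) /=; last first.
    by move=> i j /=; case: (W i); case: (W j); rewrite //= eq_sym.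
  by rewrite [X in _ + X]big1 ?addn0 // => i _; rewrite eqxx !andbF.
have all : (a + b) * (a + b) =
    2 * (\sum_(i < n) \sum_(j < n) [&& i < j, W i & W j]) + (a + b).
  rewrite -all_ordered (@sum_ordered_pairs _ (fun i j => W i && W j)) /= -?size_W; last first.
    by move=> i j; rewrite andbC.
  by congr (_ + _); apply: eq_bigr => i _; rewrite andbb.
have agm : 4 * (a * b) <= (a + b) * (a + b) by rewrite mulnn; exact: nat_AGM2.
rewrite size_W; lia.
Qed.

Lemma band_crossing K n (x : 'I_n -> bool) :
  4 * (\sum_(i < n) \sum_(j < n) band K i j * (x i != x j)) <= 2 * band_arcs K n + n * K.
Proof.
have pairs : band_arcs K n =
    \sum_(s < n + K) \sum_(i < n) \sum_(j < n) [&& i < j, in_window K s i & in_window K s j].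
  rewrite -num_arcs_band /num_arcs /band_graph.
  under eq_bigr => i _ do under eq_bigr => j _ do rewrite -[band K i j]muln1.
  rewrite (band_window_sum K (fun _ _ => true)).
  by under eq_bigr => s _ do under eq_bigr => i _ do under eq_bigr => j _ do rewrite andbT.
have sizes : n * K = \sum_(s < n + K) \sum_(i < n) in_window K s i.
  rewrite exchange_big (eq_bigr (fun _ => K)) => [|i _]; last exact: in_window_count.
  by rewrite sum_nat_const card_ord.
rewrite band_window_sum pairs sizes !big_distrr -big_split; apply: leq_sum => s _.
exact: window_crossing.
Qed.

Lemma cut_symmetrization n (w : multidigraph n) (x : 'I_n -> bool) :
  2 * (\sum_(i < n) \sum_(j < n) w i j * (x i && ~~ x j)) + \sum_(i < n) \sum_(j < n) w i j * x j
  = \sum_(i < n) \sum_(j < n) w i j * (x i != x j) + \sum_(i < n) \sum_(j < n) w i j * x i.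
Proof.
rewrite big_distrr -!big_split; apply: eq_bigr => i _.
rewrite big_distrr -!big_split; apply: eq_bigr => j _.
by case: (x i); case: (x j); rewrite /= ?muln0 ?muln1 ?addn0 ?add0n // addnn mul2n.
Qed.

(* The total out-degree of any vertex set exceeds its total in-degree by at
   most K * band_max K: out-degrees are at most band_max K, and only the
   first K vertices have in-degree smaller than band_max K. *)
Lemma band_outflow K n (x : 'I_n -> bool) :
  \sum_(i < n) \sum_(j < n) band K i j * x i
  <= \sum_(i < n) \sum_(j < n) band K i j * x j + K * band_max K.
Proof.
have -> : \sum_(i < n) \sum_(j < n) band K i j * x j = \sum_(j < n) x j * band_deg K j.
  rewrite exchange_big; apply: eq_bigr => j _ /=.
  by rewrite -big_distrl /= band_in_degree 1?mulnC // ltnW.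
have -> : \sum_(i < n) \sum_(j < n) band K i j * x i = \sum_(i < n) x i * band_deg K (n - i.+1).
  by apply: eq_bigr => i _; rewrite -big_distrl /= band_out_degree mulnC.
have early : \sum_(i < n) (i < K) * band_max K <= K * band_max K.
  rewrite -big_distrl leq_mul2r (eq_bigr (fun i : 'I_n => nat_of_bool ((0 <= i) && (i < K)))) //.
  by rewrite count_interval subn0 geq_minl orbT.
apply: leq_trans (leq_add (leqnn _) early); rewrite -big_split; apply: leq_sum => i _.
case: (x i); rewrite ?mul0n ?mul1n //.
have := band_deg_le_max K (n - i.+1).
case: (ltnP i K) => [_|le_Ki] le_max; first by rewrite mul1n (leq_trans le_max) ?leq_addl.
by rewrite [band_deg K i]band_deg_sat // (leq_trans le_max) ?leq_addr.
Qed.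

Lemma band_cut K n (X : {set 'I_n}) :
  8 * cut_arcs (band_graph K n) X <= 2 * band_arcs K n + n * K + 4 * (K * band_max K).
Proof.
have := cut_symmetrization (band_graph K n) (mem X).
have := band_outflow K (mem X); have := band_crossing K (mem X).
rewrite cut_arcs_indicator /band_graph /=; lia.
Qed.

Definition padded_band K r n : multidigraph n :=
  graph_sum (band_graph K n) (parallel_arcs n r).
Arguments padded_band : clear implicits.

Lemma padded_band_forward K r n : forward (padded_band K r n).
Proof.
move=> i j; rewrite /padded_band /graph_sum addn_gt0.
by case/orP; [apply: band_graph_forward | apply: parallel_arcs_forward].
Qed.

Lemma num_arcs_padded_band K r n :
  1 < n -> num_arcs (padded_band K r n) = band_arcs K n + r.
Proof. by move=> n_gt1; rewrite num_arcs_sum num_arcs_band num_arcs_parallel. Qed.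

(* The r padding arcs add at most r to every cut. *)
Lemma mac_padded_band K r n : 1 < n ->
  8 * mac (padded_band K r n) <= 2 * band_arcs K n + n * K + 4 * (K * band_max K) + 8 * r.
Proof.
move=> n_gt1; apply: mac_le => // X; rewrite cut_arcs_sum mulnDr leq_add ?band_cut //.
by rewrite leq_mul2l -{2}(num_arcs_parallel r n_gt1) cut_arcs_le_num_arcs orbT.
Qed.

(* With K = k+1 and m < K^4, all error terms of mac_padded_band are O(k^3). *)
Lemma padded_band_error k n m a r :
  0 < k -> m < k.+1 ^ 4 -> (n - k.+1) * (k.+1 * k) <= 2 * m -> 2 * r < k.+1 * k ->
  m = a + r ->
  2 * a + n * k.+1 + 2 * (k.+1 * (k.+1 * k)) + 8 * r <= 2 * m + 64 * k ^ 3.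
Proof.
move=> k_gt0 m_lt width_n r_lt m_eq.
have k4 : k.+1 ^ 4 <= 16 * k ^ 4.
  by rewrite (_ : 16 = 2 ^ 4) // -expnMn leq_exp2r //; lia.
have tail : (n - k.+1) * k.+1 < 32 * k ^ 3.
  have k4_split : 32 * k ^ 3 * k = 2 * (16 * k ^ 4) by rewrite -mulnA -expnSr mulnA.
  by rewrite -(ltn_pmul2r k_gt0) -mulnA k4_split; lia.
have k3 : k ^ 2 <= k ^ 3 by rewrite leq_pexp2l.
rewrite !expnS expn0 muln1 in k3 tail *.
nia.
Qed.

Lemma discrete_crossing (f : nat -> nat) m a N :
  a <= N -> f a <= m -> m < f N -> exists2 n, a <= n & f n <= m < f n.+1.
Proof.
elim: N => [|N IH]; first by rewrite leqn0 => /eqP -> /leq_ltn_trans h /h; rewrite ltnn.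
rewrite leq_eqVlt => /orP [/eqP -> /leq_ltn_trans h /h|]; first by rewrite ltnn.
rewrite ltnS => le_aN fa_le m_lt; case: (leqP (f N) m) => [fN_le|]; last exact: IH.
by exists N => //; rewrite fN_le.
Qed.

Lemma padded_band_construction m : 0 < m ->
  exists2 k, 0 < k /\ k ^ 4 <= m &
    exists n (w : multidigraph n), [/\ loopless w, acyclic w, num_arcs w = m &
      8 * mac w <= 2 * m + 64 * k ^ 3].
Proof.
move=> m_gt0.
have [k k_gt0 /andP [k4_le m_lt]] : exists2 k, 0 < k & k ^ 4 <= m < k.+1 ^ 4.
  apply: (@discrete_crossing (expn^~ 4) m 1 m.+1) => //=.
  by have := @leq_pexp2l m.+1 1 4 isT isT; rewrite expn1.
set K := k.+1.
have max_double : 2 * band_max K = K * k by rewrite band_max_double /K subn1.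
have max_gt0 : 0 < band_max K by rewrite -(ltn_pmul2l (isT : 0 < 2)) max_double muln0 muln_gt0.
have [n n_gt1 /andP [arcs_le m_lt_arcs]] :
    exists2 n, 2 <= n & band_arcs K n <= m < band_arcs K n.+1.
  apply: (@discrete_crossing (band_arcs K) m 2 (m.+1 + K)).
  - by rewrite /K; lia.
  - by rewrite band_arcs_two subn1 (leq_trans _ k4_le) // -[leqLHS]expn1 leq_pexp2l.
  - apply: leq_trans (band_arcs_lower K _); rewrite addnK.
    by rewrite -{1}(muln1 m.+1) leq_mul2l max_gt0 orbT.
set r := m - band_arcs K n.
have r_lt : r < band_max K.
  by move: m_lt_arcs; rewrite band_arcsS /r; have := band_deg_le_max K n; lia.
exists k => //; exists n, (padded_band K r n); split.
- exact/forward_loopless/padded_band_forward.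
- exact/forward_acyclic/padded_band_forward.
- by rewrite num_arcs_padded_band // /r subnKC.
apply: leq_trans (mac_padded_band K r n_gt1) _.
have -> : 4 * (K * band_max K) = 2 * (K * (K * k)) by rewrite -max_double; lia.
have lower := band_arcs_lower K n.
by apply: (@padded_band_error k n m (band_arcs K n) r) => //; lia.
Qed.

Lemma INR_expn k e : INR (k ^ e) = pow (INR k) e.
Proof. by elim: e => [|e IH] //; rewrite expnS mult_INR IH. Qed.

Lemma pow3_le_Rpower (x y : R) :
  (0 < x)%R -> (pow x 4 <= y)%R -> (pow x 3 <= Rpower y (3 / 4))%R.
Proof.
move=> x_gt0 x4_le.
have -> : pow x 3 = Rpower (pow x 4) (3 / 4).
  rewrite -(Rpower_pow 4 _ x_gt0) Rpower_mult -(Rpower_pow 3 _ x_gt0); congr Rpower.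
  by rewrite /INR; lra.
by apply: Rle_Rpower_l; [lra | split; [apply: pow_lt|]].
Qed.

Theorem mainTheorem10 :
  exists k1 : R, forall m : nat, (1 <= m)%N ->
    exists (n : nat) (w : multidigraph n),
      loopless w /\ acyclic w /\ num_arcs w = m /\
      (INR (mac w) <= INR m / 4 + k1 * Rpower (INR m) (3 / 4))%R.
Proof.
exists 8%R => m m_gt0.
have [k [k_gt0 k4_le] [n [w [w_loopless w_acyclic w_arcs w_mac]]]] :=
  padded_band_construction m_gt0.
exists n, w; do !split => //.
have k_pos : (0 < INR k)%R by apply/lt_0_INR/ltP.
have k3_le : (INR (k ^ 3) <= Rpower (INR m) (3 / 4))%R.
  by rewrite INR_expn; apply: pow3_le_Rpower; rewrite // -INR_expn; apply/le_INR/leP.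
move/leP/le_INR: w_mac; rewrite (mult_INR 8) plus_INR (mult_INR 2) (mult_INR 64).
move: k3_le; set k3 := INR (k ^ 3); rewrite /=; lra.
Qed.
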